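(* Let $w$ be a permutation with $\{k,k+1\}\subseteq\textsf{supp}(w)$. Then exactly one of the following holds: (i) $w$ has a reduced word of the form $\cdots k\cdots(k+1)\cdots k\cdots$ or of the form $\cdots(k+1)\cdots k\cdots(k+1)\cdots$; (ii) $w$ has a reduced word of the form (a word in letters $\le k$)(a word in letters $\ge k+1$) or of the form (a word in letters $\ge k+1$)(a word in letters $\le k$).
   Context: $\sigma_i=(i,i+1)$; reduced words are sequences of subscripts of reduced expressions of a permutation as products of the $\sigma_i$. $\textsf{supp}(w)$ is the set of letters appearing in reduced words of $w$. *)

From mathcomp Require Import all_boot all_fingroup.
Set Implicit Arguments. Unset Strict Implicit. Unset Printing Implicit Defensive.

Local Open Scope group_scope.

(* Simple transposition sigma_i = (i, i+1), letters i numbered 1..n-1 acting on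
   {1..n}; since 'I_n = {0..n-1}, sigma_i swaps the ordinals i-1 and i.
   (For letters outside 1..n-1 the value is irrelevant: words are required to be valid.) *)
Definition sigma (n i : nat) : 'S_n :=
  match (insub i.-1 : option 'I_n), (insub i : option 'I_n) with
  | Some a, Some b => tperm a b
  | _, _ => 1
  end.

Definition valid_word (n : nat) (a : seq nat) : bool :=
  all (fun i => (0 < i) && (i < n)) a.

Definition word_perm (n : nat) (a : seq nat) : 'S_n :=
  \prod_(i <- a) sigma n i.

Definition reduced_word (n : nat) (w : 'S_n) (a : seq nat) : Prop :=
  [/\ valid_word n a, word_perm n a = w &
      forall b, valid_word n b -> word_perm n b = w -> size a <= size b].

Definition supp (n : nat) (w : 'S_n) (i : nat) : Prop :=
  exists a, reduced_word w a /\ i \in a.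

(* Read p : 'S_n in one-line notation, [p x] being the entry at position [x]; then
   [p * sigma n i] exchanges the entries [i.-1] and [i].  Counting inversions shows
   that in a reduced word every letter [i], when it is read, finds [i.-1] to the left
   of [i].

   If a reduced word contains both k.+1 ... k and k ... k.+1 as subsequences, it
   contains k k.+1 k or k.+1 k k.+1; otherwise its letters <= k and >= k.+1 can be
   separated, since {k, k.+1} is the only non-commuting pair across the two blocks.

   For exclusivity, let [lows_left w] say that every entry below k sits at a position
   <= k.  A word (letters <= k)(letters >= k.+1) yields such a w.  Along a reduced
   word containing k.+1 ... k, the letter k.+1 establishes "if [lows_left] then the
   entry k sits right of position k" (by pigeonhole), later letters preserve this, the
   letter k then destroys [lows_left], and no later letter restores it.  The mirror
   case follows by passing to w^-1 and reversed words. *)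

From mathcomp Require Import all_boot all_order all_fingroup zify.
Set Implicit Arguments. Unset Strict Implicit. Unset Printing Implicit Defensive.
Local Open Scope group_scope.

Lemma subseq_pairP (T : eqType) (x y : T) s :
  subseq [:: x; y] s -> exists c1 c2 c3, s = c1 ++ x :: c2 ++ y :: c3.
Proof.
elim: s => [|z s IH] //=; case: eqP => [<-|_].
  by rewrite sub1seq => /splitPr[c2 c3]; exists [::], c2, c3.
by move=> /IH[c1 [c2 [c3 ->]]]; exists (z :: c1), c2, c3.
Qed.

Lemma subseq_pair_rev (T : eqType) (x y : T) s :
  subseq [:: x; y] (rev s) = subseq [:: y; x] s.
Proof. by rewrite -(subseq_rev [:: y; x]). Qed.

Lemma subseq_both_orders (T : eqType) (x y : T) s : x != y ->
  subseq [:: x; y] s -> subseq [:: y; x] s -> subseq [:: x; y; x] s || subseq [:: y; x; y] s.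
Proof.
move=> x_ne_y; elim: s => [|z s IH] //=.
have y_ne_x : (y == x) = false by rewrite eq_sym (negbTE x_ne_y).
have [<-|_] := eqVneq x z; first by rewrite /= y_ne_x => _ ->.
have [_|_] := eqVneq y z; last exact: IH.
by rewrite /= => -> _; rewrite orbT.
Qed.

Lemma subseq_alternating (T : eqType) (x y : T) s :
  subseq [:: x; y; x] s -> subseq [:: x; y] s && subseq [:: y; x] s.
Proof.
move=> xyx; rewrite !(subseq_trans _ xyx) ?subseq_cons //.
exact: (prefix_subseq [:: x; y] [:: x]).
Qed.

Lemma sigma_tperm_succ n (A B : 'I_n) : B = A.+1 :> nat -> sigma n B = tperm A B.
Proof.
move=> AB; rewrite /sigma AB /=.
case: insubP => [A' _ A'E|]; last by rewrite ltn_ord.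
case: insubP => [B' _ B'E|]; last by rewrite -AB ltn_ord.
by congr tperm; apply: val_inj; rewrite ?A'E ?B'E.
Qed.

Lemma sigma_tperm n i : 0 < i < n ->
  exists A B : 'I_n, [/\ B = A.+1 :> nat, B = i :> nat & sigma n i = tperm A B].
Proof.
case/andP=> i_gt0 i_lt_n; have predi_lt_n : i.-1 < n by rewrite (leq_ltn_trans (leq_pred i)).
set A := Ordinal predi_lt_n; set B := Ordinal i_lt_n.
have AB : B = A.+1 :> nat by rewrite /= prednK.
by exists A, B; split; rewrite // -(sigma_tperm_succ AB).
Qed.

Lemma sigma_out n i : ~~ (0 < i < n) -> sigma n i = 1.
Proof.
move=> i_out; rewrite /sigma; case: insubP => [A _ AE|//]; case: insubP => [B iB BE|//].
have i0 : i = 0 by move: i_out; rewrite iB andbT -eqn0Ngt => /eqP.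
by rewrite (_ : A = B) ?tperm1 //; apply: val_inj; rewrite AE BE i0.
Qed.

Lemma sigmaV n i : (sigma n i)^-1 = sigma n i.
Proof.
have [/sigma_tperm[A [B [_ _ ->]]]|/sigma_out->] := boolP (0 < i < n).
  exact: tpermV.
exact: invg1.
Qed.

Lemma sigma_fix n i (x : 'I_n) : x <> i.-1 :> nat -> x <> i :> nat -> sigma n i x = x.
Proof.
move=> x_ne_predi x_ne_i; have [/sigma_tperm[A [B [AB BE ->]]]|/sigma_out->] := boolP (0 < i < n).
  by apply: tpermD; apply/eqP => /(congr1 val) /=; lia.
by rewrite perm1.
Qed.

Lemma sigma_commute n i j : j.+2 <= i -> commute (sigma n i) (sigma n j).
Proof.
move=> far; have [/sigma_tperm[A [B [AB BE ->]]]|/sigma_out->] := boolP (0 < i < n); last first.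
  exact: commute_sym (commute1 _).
have [/sigma_tperm[C [D [CD DE ->]]]|/sigma_out->] := boolP (0 < j < n); last exact: commute1.
apply/commgP/conjg_fixP; rewrite tpermJ !tpermD //; apply/eqP => /(congr1 val) /=; lia.
Qed.

Lemma word_perm_nil n : word_perm n [::] = 1.
Proof. by rewrite /word_perm big_nil. Qed.

Lemma word_perm_cons n i a : word_perm n (i :: a) = sigma n i * word_perm n a.
Proof. by rewrite /word_perm big_cons. Qed.

Lemma word_perm_cat n a b : word_perm n (a ++ b) = word_perm n a * word_perm n b.
Proof. by rewrite /word_perm big_cat. Qed.

Lemma word_perm_rcons n a i : word_perm n (rcons a i) = word_perm n a * sigma n i.
Proof. by rewrite -cats1 word_perm_cat word_perm_cons word_perm_nil mulg1. Qed.

Lemma word_perm_rev n a : word_perm n (rev a) = (word_perm n a)^-1.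
Proof.
elim: a => [|i a IH]; first by rewrite word_perm_nil invg1.
by rewrite rev_cons word_perm_rcons IH word_perm_cons invMg sigmaV.
Qed.

Lemma commute_word_perm n g a :
  {in a, forall i, commute g (sigma n i)} -> commute g (word_perm n a).
Proof.
move=> g_comm; rewrite /word_perm big_seq.
by apply: big_ind => //; [exact: commute1 | exact: commuteM].
Qed.

Lemma word_perm_fix n a (x : 'I_n) :
  {in a, forall i, x <> i.-1 :> nat /\ x <> i :> nat} -> word_perm n a x = x.
Proof.
move=> x_far; rewrite /word_perm big_seq.
apply: (big_ind (fun g : 'S_n => g x = x)) => [|g h gx hx|i /x_far[]]; last exact: sigma_fix.
  exact: perm1.
by rewrite permM gx hx.
Qed.

Lemma word_perm_partition n (P : pred nat) a :
  (forall x y, subseq [:: x; y] a -> ~~ P x -> P y -> commute (sigma n x) (sigma n y)) ->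
  word_perm n a = word_perm n (filter P a) * word_perm n (filter (predC P) a).
Proof.
elim: a => [|z a IH] comm /=; first by rewrite !word_perm_nil mulg1.
have comm_a x y : subseq [:: x; y] a -> ~~ P x -> P y -> commute (sigma n x) (sigma n y).
  by move=> xy; apply: comm; apply: subseq_trans xy (subseq_cons _ _).
case Pz: (P z); rewrite /= !word_perm_cons IH // !mulgA //; congr (_ * _).
apply: commute_word_perm => y; rewrite mem_filter => /andP[Py ya].
by apply: comm; rewrite ?Pz //= eqxx sub1seq.
Qed.

Lemma reduced_word_prefix n (w : 'S_n) c d :
  reduced_word w (c ++ d) -> reduced_word (word_perm n c) c.
Proof.
case=> valid_cd <- min_cd; move: valid_cd; rewrite /valid_word all_cat => /andP[valid_c valid_d].
split=> // b valid_b bE; rewrite -(leq_add2r (size d)) -!size_cat.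
apply: min_cd; last by rewrite !word_perm_cat bE.
by rewrite /valid_word all_cat; apply/andP.
Qed.

Lemma reduced_word_rev n (w : 'S_n) a : reduced_word w a -> reduced_word w^-1 (rev a).
Proof.
case=> valid_a <- min_a; split; rewrite ?word_perm_rev ?/valid_word ?all_rev //.
move=> b valid_b /(congr1 (fun g => g^-1)); rewrite invgK -word_perm_rev size_rev => bE.
by rewrite -(size_rev b); apply: min_a; rewrite // /valid_word all_rev.
Qed.

Lemma reduced_word_partition n (w : 'S_n) (P : pred nat) a :
  reduced_word w a ->
  (forall x y, subseq [:: x; y] a -> ~~ P x -> P y -> commute (sigma n x) (sigma n y)) ->
  reduced_word w (filter P a ++ filter (predC P) a).
Proof.
case=> valid_a <- min_a comm; split.
- by apply/allP => x; rewrite mem_cat !mem_filter => /orP[]/andP[_ /(allP valid_a)].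
- by rewrite word_perm_cat -word_perm_partition.
- by rewrite size_cat !size_filter count_predC.
Qed.

Lemma perm_increasing_eq1 n (p : 'S_n) : (forall x y : 'I_n, x < y -> p x < p y) -> p = 1.
Proof.
move=> p_incr; apply/permP => x; rewrite perm1.
have p_mono : {mono p : x y / (x <= y)%O} by apply: Order.TotalTheory.le_mono.
by apply: (Order.mono_unique _ _ p_mono) => //; apply: Order.TotalTheory.le_total.
Qed.

Definition inversions n (p : 'S_n) :=
  #|[set xy : 'I_n * 'I_n | (xy.1 < xy.2) && (p xy.2 < p xy.1)]|.

Lemma inversions1 n : inversions (1 : 'S_n) = 0.
Proof.
apply: eq_card0 => -[x y]; rewrite !inE /= !perm1.
by apply/andP => -[/ltn_trans lt_y /lt_y]; rewrite ltnn.
Qed.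

Lemma inversions_eq0 n (p : 'S_n) : inversions p = 0 -> p = 1.
Proof.
move=> /eqP; rewrite cards_eq0 => /eqP no_inv; apply: perm_increasing_eq1 => x y lt_xy.
have : (x, y) \notin [set xy : 'I_n * 'I_n | (xy.1 < xy.2) && (p xy.2 < p xy.1)].
  by rewrite no_inv inE.
rewrite inE /= lt_xy /= -leqNgt leq_eqVlt => /orP[/eqP/val_inj/perm_inj yx|//].
by move: lt_xy; rewrite yx ltnn.
Qed.

Lemma tperm_succ_ltE n (A B u v : 'I_n) : B = A.+1 :> nat ->
  (u, v) != (A, B) -> (u, v) != (B, A) -> (tperm A B u < tperm A B v) = (u < v).
Proof.
by rewrite !xpair_eqE !permE /= -!val_eqE /= => AB; do ![case: eqP => /= ?]; lia.
Qed.

Lemma inversions_mul_tperm_asc n (p : 'S_n) (A B : 'I_n) :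
  B = A.+1 :> nat -> p^-1 A < p^-1 B -> inversions (p * tperm A B) = (inversions p).+1.
Proof.
move=> AB asc; rewrite /inversions.
set S := [set xy : 'I_n * 'I_n | (xy.1 < xy.2) && (p xy.2 < p xy.1)].
have -> : [set xy : 'I_n * 'I_n | (xy.1 < xy.2) &&
    ((p * tperm A B)%g xy.2 < (p * tperm A B)%g xy.1)] = (p^-1 A, p^-1 B) |: S.
  apply/setP => -[x y]; rewrite !inE xpair_eqE /= !permM.
  have [/andP[/eqP-> /eqP->]|not_pair] := boolP ((x == p^-1 A) && (y == p^-1 B)).
    by rewrite asc !permKV tpermL tpermR /= AB ltnSn.
  have [lt_xy|] := boolP (x < y); rewrite //=.
  rewrite tperm_succ_ltE // xpair_eqE !(can2_eq (permK p) (permKV p)).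
    by apply: contraTN lt_xy => /andP[/eqP-> /eqP->]; rewrite -leqNgt ltnW.
  by rewrite andbC.
by rewrite cardsU1 inE /= asc !permKV AB ltnNge leqnSn.
Qed.

Lemma inversions_mul_tperm_desc n (p : 'S_n) (A B : 'I_n) :
  B = A.+1 :> nat -> p^-1 B < p^-1 A -> (inversions (p * tperm A B)).+1 = inversions p.
Proof.
move=> AB desc; set q := p * tperm A B.
have qVE x : q^-1 x = p^-1 (tperm A B x) by rewrite invMg tpermV permM.
have -> : p = q * tperm A B by rewrite -mulgA tperm2 mulg1.
by rewrite inversions_mul_tperm_asc // !qVE tpermL tpermR.
Qed.

Lemma inversions_mul_sigma n (p : 'S_n) i : inversions (p * sigma n i) <= (inversions p).+1.
Proof.
have [i_valid|/sigma_out->] := boolP (0 < i < n); last by rewrite mulg1.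
have [A [B [AB _ ->]]] := sigma_tperm i_valid.
case: (ltngtP (p^-1 A) (p^-1 B)) => [asc|desc|/val_inj/perm_inj AeqB].
- by rewrite inversions_mul_tperm_asc.
- by rewrite -(inversions_mul_tperm_desc AB desc) // leqW.
- by move: AB; rewrite AeqB; lia.
Qed.

Lemma inversions_mul_word_perm n (p : 'S_n) a :
  inversions (p * word_perm n a) <= inversions p + size a.
Proof.
elim: a p => [|i a IH] p; first by rewrite word_perm_nil mulg1 addn0.
rewrite word_perm_cons mulgA (leq_trans (IH _)) //= addnS -addSn leq_add2r.
exact: inversions_mul_sigma.
Qed.

Lemma nat_descent (f : nat -> nat) i j :
  i <= j -> f j < f i -> exists2 m, i <= m < j & f m.+1 < f m.
Proof.
elim: j => [|j IH] le_ij lt_f; first by move: lt_f; rewrite (_ : i = 0) ?ltnn //; lia.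
have le_ij' : i <= j.
  by move: le_ij lt_f; rewrite leq_eqVlt => /orP[/eqP->|//]; rewrite ltnn.
have [desc|asc] := ltnP (f j.+1) (f j); first by exists j; rewrite ?le_ij' ?ltnSn.
have [m /andP[im mj] fm] := IH le_ij' (leq_ltn_trans asc lt_f).
by exists m; rewrite // im (ltn_trans mj).
Qed.

Lemma exists_descent n (p : 'S_n) :
  0 < inversions p -> exists A B : 'I_n, B = A.+1 :> nat /\ p^-1 B < p^-1 A.
Proof.
rewrite card_gt0 => /set0Pn[[x y]]; rewrite inE /= => /andP[lt_xy lt_pyx].
pose f j := if insub j is Some o then nat_of_ord (p^-1 o) else 0.
have fE (o : 'I_n) : f o = p^-1 o by rewrite /f valK.
have [|j /andP[_ lt_j] desc] := @nat_descent f (p y) (p x) (ltnW lt_pyx).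
  by rewrite !fE !permK.
have Sj_lt_n : j.+1 < n by rewrite (leq_ltn_trans lt_j).
have j_lt_n : j < n by rewrite ltnW.
by exists (Ordinal j_lt_n), (Ordinal Sj_lt_n); rewrite -!fE.
Qed.

Lemma word_of_inversions n (p : 'S_n) :
  exists b, [/\ valid_word n b, word_perm n b = p & size b = inversions p].
Proof.
move inv_p : (inversions p) => m; elim: m p inv_p => [|m IH] p inv_p.
  by exists [::]; rewrite (inversions_eq0 inv_p) word_perm_nil.
have [|A [B [AB desc]]] := exists_descent (p := p); first by rewrite inv_p.
have := inversions_mul_tperm_desc AB desc; rewrite inv_p => -[/IH[b [valid_b bE size_b]]].
exists (rcons b B); split.
- by rewrite /valid_word all_rcons ltn_ord AB.
- by rewrite word_perm_rcons bE (sigma_tperm_succ AB) -mulgA tperm2 mulg1.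
- by rewrite size_rcons size_b.
Qed.

Lemma reduced_word_size n (w : 'S_n) a : reduced_word w a -> size a = inversions w.
Proof.
case=> valid_a wE min_a; have [b [valid_b bE size_b]] := word_of_inversions w.
apply/eqP; rewrite eqn_leq -size_b min_a //= size_b.
by have := inversions_mul_word_perm (1 : 'S_n) a; rewrite mul1g inversions1 wE.
Qed.

Definition ascent n (p : 'S_n) i :=
  forall x y : 'I_n, p x = i.-1 :> nat -> p y = i :> nat -> x < y.

Lemma ascentE n (p : 'S_n) i (A B : 'I_n) :
  A = i.-1 :> nat -> B = i :> nat -> ascent p i <-> p^-1 A < p^-1 B.
Proof.
move=> AE BE; split=> [|asc x y px py]; first by apply; rewrite permKV.
have -> : x = p^-1 A by apply/(canRL (permK p))/val_inj; rewrite /= px AE.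
have -> : y = p^-1 B by apply/(canRL (permK p))/val_inj; rewrite /= py BE.
exact: asc.
Qed.

Lemma reduced_word_ascent n (w : 'S_n) c i d :
  reduced_word w (c ++ i :: d) -> ascent (word_perm n c) i.
Proof.
move=> red; have size_cid := reduced_word_size red; case: red => valid_cid wE _.
move: valid_cid; rewrite /valid_word all_cat /= => /and3P[valid_c i_valid _].
have [A [B [AB BE sE]]] := sigma_tperm i_valid.
apply/(ascentE _ (_ : A = i.-1 :> nat) BE); first by rewrite -BE AB.
case: ltngtP => // [desc|/val_inj/perm_inj AeqB]; last first.
  by move: AB; rewrite AeqB; lia.
(* A descent at [i] would leave [w] with fewer inversions than the length of the word. *)
have := inversions_mul_tperm_desc AB desc.
have := inversions_mul_word_perm (word_perm n c * tperm A B) d.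
have := inversions_mul_word_perm (1 : 'S_n) c; rewrite mul1g inversions1.
rewrite -mulgA -sE -word_perm_cons -word_perm_cat wE -size_cid size_cat /=; lia.
Qed.

Lemma reduced_word_invariant n (R : pred 'S_n) (w : 'S_n) c d :
  (forall p i, 0 < i < n -> ascent p i -> R p -> R (p * sigma n i)) ->
  reduced_word w (c ++ d) -> R (word_perm n c) -> R w.
Proof.
move=> R_step; elim: d c => [|i d IH] c red Rc.
  by case: red; rewrite cats0 => _ <-.
apply: (IH (rcons c i)); first by rewrite cat_rcons.
rewrite word_perm_rcons; apply: R_step => //; last exact: reduced_word_ascent red.
by case: red => /allP valid_cid _ _; apply: valid_cid; rewrite mem_cat mem_head orbT.
Qed.

Lemma card_ord_lt n m : m <= n -> #|[set j : 'I_n | j < m]| = m.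
Proof.
move=> le_mn; have -> : [set j : 'I_n | j < m] = widen_ord le_mn @: 'I_m.
  apply/setP => j; rewrite !inE; apply/idP/imsetP => [lt_jm|[i _ ->] /=]; last exact: ltn_ord.
  by exists (Ordinal lt_jm); last exact: val_inj.
by rewrite card_imset ?card_ord // => i j /(congr1 val) /= /val_inj.
Qed.

Section SplitInvariant.

Variables n k : nat.
Implicit Types p : 'S_n.

Definition lows_left p := [forall x : 'I_n, (p x < k) ==> (x <= k)].

Definition k_right p := [forall x : 'I_n, (p x == k :> nat) ==> (k < x)].

Definition k_right_if_lows_left p := lows_left p ==> k_right p.

Lemma lows_leftPn p : reflect (exists x : 'I_n, p x < k /\ k < x) (~~ lows_left p).
Proof.
apply: (iffP forallPn) => [[x]|[x [px_lt xk]]]; last by exists x; rewrite px_lt -ltnNge.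
by rewrite negb_imply -ltnNge => /andP[]; exists x.
Qed.

Lemma lows_left_mul_sigma p i : 0 < i < n -> i != k -> lows_left p -> lows_left (p * sigma n i).
Proof.
move=> i_valid /eqP i_ne_k /forallP low; have [A [B [AB BE ->]]] := sigma_tperm i_valid.
apply/forallP => x; apply/implyP; have /implyP := low x; rewrite permM.
case: tpermP => [->|->|_ _ //] low_x lt_k; apply: low_x; lia.
Qed.

Lemma k_right_mul_sigma p i :
  0 < i < n -> i != k -> i != k.+1 -> k_right p -> k_right (p * sigma n i).
Proof.
move=> i_valid /eqP i_ne_k /eqP i_ne_Sk /forallP kr.
have [A [B [AB BE ->]]] := sigma_tperm i_valid.
apply/forallP => x; apply/implyP; have /implyP := kr x; rewrite permM.
case: tpermP => [->|->|_ _ //] _ /eqP; lia.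
Qed.

Lemma not_lows_left_mul_sigma p i :
  0 < i < n -> ascent p i -> ~~ lows_left p -> ~~ lows_left (p * sigma n i).
Proof.
move=> i_valid asc /lows_leftPn[x [px_lt kx]]; have [A [B [AB BE sE]]] := sigma_tperm i_valid.
apply/lows_leftPn; rewrite sE.
case: (tpermP A B (p x)) => [pxA|pxB|px_ne_A px_ne_B].
- move: px_lt; rewrite pxA => A_lt_k; have [lt_ik|le_ki] := ltnP i k.
    by exists x; rewrite permM pxA tpermL; split => //; lia.
  have lt_xy : x < p^-1 B by apply: asc; rewrite ?permKV ?pxA; lia.
  by exists (p^-1 B); rewrite permM permKV tpermR; split; lia.
- by exists x; rewrite permM pxB tpermR; split => //; move: px_lt; rewrite pxB; lia.
- by exists x; rewrite permM tpermD //; apply/eqP => /esym.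
Qed.

Lemma lows_left_pigeonhole p (x y : 'I_n) :
  lows_left p -> p x = k :> nat -> p y = k.+1 :> nat -> x <= k -> k < y.
Proof.
move=> /forallP low px py xk; rewrite ltnNge; apply/negP => yk.
have Sk_lt_n : k.+2 <= n by rewrite -py ltn_ord.
suff : #|[set j : 'I_n | j < k.+2]| <= #|[set z : 'I_n | z < k.+1]|.
  by rewrite !card_ord_lt ?ltnn // ltnW.
rewrite -(card_imset _ (@perm_inj _ p^-1)); apply/subset_leq_card/subsetP => _ /imsetP[j + ->].
rewrite !inE ltnS => j_le_Sk; have [lt_jk|gt_jk|eq_jk] := ltngtP j k.
- by have /implyP := low (p^-1 j); rewrite permKV; apply.
- by rewrite (_ : j = p y) ?permK //; apply: val_inj; rewrite /= py; lia.
- by rewrite (_ : j = p x) ?permK //; apply: val_inj; rewrite /= px.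
Qed.

Lemma k_right_if_lows_left_ascent_succ p :
  k.+1 < n -> ascent p k.+1 -> k_right_if_lows_left (p * sigma n k.+1).
Proof.
move=> Sk_lt_n asc; have Sk_valid : 0 < k.+1 < n by [].
have [low|not_low] := boolP (lows_left p); last first.
  by rewrite /k_right_if_lows_left (negbTE (not_lows_left_mul_sigma Sk_valid asc not_low)).
apply/implyP => _; have [A [B [AB BE ->]]] := sigma_tperm Sk_valid.
apply/forallP => x; apply/implyP; rewrite permM.
case: tpermP => [_ /eqP|pxB _|px_ne_A _ /eqP pxk]; first lia; last first.
  by case: px_ne_A; apply: val_inj; rewrite /= pxk; lia.
have lt_yx : p^-1 A < x by apply: asc; rewrite ?permKV ?pxB /=; lia.
have pyA : p (p^-1 A) = k :> nat by rewrite permKV; lia.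
have pxSk : p x = k.+1 :> nat by rewrite pxB; lia.
rewrite ltnNge; apply/negP => xk.
by have := lows_left_pigeonhole low pyA pxSk (ltnW (leq_trans lt_yx xk)); lia.
Qed.

Lemma not_lows_left_ascent_k p :
  0 < k < n -> k_right_if_lows_left p -> ascent p k -> ~~ lows_left (p * sigma n k).
Proof.
move=> k_valid kr_low asc; have [low|] := boolP (lows_left p); last first.
  exact: not_lows_left_mul_sigma.
have /forallP kr := implyP kr_low low; have [A [B [AB BE ->]]] := sigma_tperm k_valid.
apply/lows_leftPn; exists (p^-1 B); rewrite permM permKV tpermR; split; first lia.
by have /implyP := kr (p^-1 B); rewrite permKV BE eqxx; apply.
Qed.

Lemma k_right_if_lows_left_mul_sigma p i : 0 < k -> k.+1 < n -> 0 < i < n ->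
  ascent p i -> k_right_if_lows_left p -> k_right_if_lows_left (p * sigma n i).
Proof.
move=> k_gt0 Sk_lt_n i_valid asc kr_low; have k_valid : 0 < k < n by rewrite k_gt0 ltnW.
have [ik|i_ne_k] := eqVneq i k.
  subst i; by rewrite /k_right_if_lows_left (negbTE (not_lows_left_ascent_k k_valid kr_low asc)).
have [iSk|i_ne_Sk] := eqVneq i k.+1.
  by subst i; apply: k_right_if_lows_left_ascent_succ.
have [low|not_low] := boolP (lows_left p); last first.
  by rewrite /k_right_if_lows_left (negbTE (not_lows_left_mul_sigma i_valid asc not_low)).
by rewrite /k_right_if_lows_left lows_left_mul_sigma ?k_right_mul_sigma // (implyP kr_low).
Qed.

Lemma reduced_word_descent_not_lows_left w a :
  reduced_word w a -> subseq [:: k.+1; k] a -> ~~ lows_left w.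
Proof.
move=> red /subseq_pairP[c1 [c2 [c3 aE]]]; subst a.
have [/andP[_ Sk_lt_n] k_valid] : 0 < k.+1 < n /\ 0 < k < n.
  by case: red => /allP valid _ _; split; apply: valid; rewrite !(mem_cat, inE) eqxx ?orbT.
have red' : reduced_word w ((c1 ++ k.+1 :: c2) ++ k :: c3) by rewrite -catA.
have kr1 : k_right_if_lows_left (word_perm n (c1 ++ [:: k.+1])).
  rewrite cats1 word_perm_rcons; apply: k_right_if_lows_left_ascent_succ => //.
  exact: reduced_word_ascent red.
have kr2 : k_right_if_lows_left (word_perm n (c1 ++ k.+1 :: c2)).
  apply: (reduced_word_invariant (c := c1 ++ [:: k.+1]) (d := c2)) kr1 => [p i|].
    by apply: k_right_if_lows_left_mul_sigma; case/andP: k_valid.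
  by rewrite -catA; apply: reduced_word_prefix red'.
have not_low3 : ~~ lows_left (word_perm n ((c1 ++ k.+1 :: c2) ++ [:: k])).
  rewrite cats1 word_perm_rcons; apply: not_lows_left_ascent_k kr2 _ => //.
  exact: reduced_word_ascent red'.
apply: (reduced_word_invariant (R := fun p => ~~ lows_left p) (d := c3)) not_low3 => [p i|].
  exact: not_lows_left_mul_sigma.
by rewrite cats1 cat_rcons.
Qed.

End SplitInvariant.

Lemma lows_left_word_perm_cat n k u v :
  all (fun i => i <= k) u -> all (fun i => k.+1 <= i) v -> lows_left k (word_perm n (u ++ v)).
Proof.
move=> /allP u_low /allP v_high; apply/forallP => x; apply/implyP.
rewrite word_perm_cat permM; have [//|kx] := leqP x k.
rewrite (@word_perm_fix _ u x) => [lt_k|i /u_low]; last by lia.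
have fix_vx : word_perm n v (word_perm n v x) = word_perm n v x.
  by apply: word_perm_fix => i /v_high; lia.
by move: lt_k; rewrite (perm_inj fix_vx); lia.
Qed.

Lemma split_word_excludes_descent n k (w : 'S_n) a u v :
  reduced_word w a -> subseq [:: k.+1; k] a -> word_perm n (u ++ v) = w ->
  all (fun i => i <= k) u -> all (fun i => k.+1 <= i) v -> False.
Proof.
move=> red desc wE u_low v_high.
by have := reduced_word_descent_not_lows_left red desc; rewrite -wE lows_left_word_perm_cat.
Qed.

Lemma split_word_excludes_ascent n k (w : 'S_n) a u v :
  reduced_word w a -> subseq [:: k; k.+1] a -> word_perm n (u ++ v) = w ->
  all (fun i => k.+1 <= i) u -> all (fun i => i <= k) v -> False.
Proof.
move=> /reduced_word_rev red asc wE u_high v_low.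
apply: (split_word_excludes_descent (k := k) (u := rev v) (v := rev u) red);
  rewrite ?all_rev ?subseq_pair_rev //.
by rewrite -rev_cat word_perm_rev wE.
Qed.

Lemma reduced_word_split_low_high n k (w : 'S_n) a :
  reduced_word w a -> ~~ subseq [:: k.+1; k] a ->
  exists u v,
    [/\ reduced_word w (u ++ v), all (fun i => i <= k) u & all (fun i => k.+1 <= i) v].
Proof.
move=> red no_desc; exists [seq i <- a | i <= k], [seq i <- a | ~~ (i <= k)]; split.
- apply: reduced_word_partition => // x y xy; rewrite -ltnNge => kx yk; apply: sigma_commute.
  have [xE|] := eqVneq x k.+1; last lia.
  have [yE|] := eqVneq y k; last lia.
  by move: no_desc; rewrite -xE -yE xy.
- by apply/allP => i; rewrite mem_filter => /andP[].
- by apply/allP => i; rewrite mem_filter -ltnNge => /andP[].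
Qed.

Lemma reduced_word_split_high_low n k (w : 'S_n) a :
  reduced_word w a -> ~~ subseq [:: k; k.+1] a ->
  exists u v,
    [/\ reduced_word w (u ++ v), all (fun i => k.+1 <= i) u & all (fun i => i <= k) v].
Proof.
move=> /reduced_word_rev red_rev no_asc.
have [|u [v [/reduced_word_rev red_uv u_low v_high]]] :=
  reduced_word_split_low_high (k := k) red_rev.
  by rewrite subseq_pair_rev.
by exists (rev v), (rev u); rewrite -rev_cat -[w]invgK !all_rev; split.
Qed.

Theorem proposition3p10 (n : nat) (w : 'S_n) (k : nat) :
  supp w k -> supp w k.+1 ->
  let P1 := exists a, reduced_word w a /\
              (subseq [:: k; k.+1; k] a \/ subseq [:: k.+1; k; k.+1] a) in
  let P2 := exists u v, reduced_word w (u ++ v) /\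
              ((all (fun i => i <= k) u /\ all (fun i => k.+1 <= i) v) \/
               (all (fun i => k.+1 <= i) u /\ all (fun i => i <= k) v)) in
  (P1 \/ P2) /\ ~ (P1 /\ P2).
Proof.
move=> [a [red_a _]] _ P1 P2; split.
  have [desc|no_desc] := boolP (subseq [:: k.+1; k] a); last first.
    have [u [v [red_uv u_low v_high]]] := reduced_word_split_low_high red_a no_desc.
    by right; exists u, v; split; last left.
  have [asc|no_asc] := boolP (subseq [:: k; k.+1] a); last first.
    have [u [v [red_uv u_high v_low]]] := reduced_word_split_high_low red_a no_asc.
    by right; exists u, v; split; last right.
  by left; exists a; split => //; apply/orP; apply: subseq_both_orders; rewrite ?ltn_eqF.
case=> [[b [red_b alt_b]] [u [v [[_ uvE _] split_uv]]]].
have /andP[asc desc] : subseq [:: k; k.+1] b && subseq [:: k.+1; k] b.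
  by case: alt_b => /subseq_alternating/andP[-> ->].
case: split_uv => [[u_low v_high]|[u_high v_low]].
- exact: split_word_excludes_descent red_b desc uvE u_low v_high.
- exact: split_word_excludes_ascent red_b asc uvE u_high v_low.
Qed.
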